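(* If $\mathsf{A}^{i+1}=\{0\}$, then $[\varpi]^i\colon\mathsf{B}^i\to\mathsf{A}^i$ is surjective.
   Context: Let $A$ be the graded commutative algebra of functions of a graded manifold with a flat $P_\infty$-structure $\lambda_i$, $\mathrm{d}:=\lambda_1$, $\mathsf{A}=H_{\mathrm{d}}(A)$. Given a flat $A_\infty$ deformation quantization $\mu_i$ on $A[[\epsilon]]$, set $\tau_i=\epsilon^{i-2}\mu_i$, $\delta:=\tau_1=\sum_{n\ge0}\epsilon^n\mathrm{d}_n$ with $\mathrm{d}_0=\mathrm{d}$, and $\mathsf{B}$ the $\delta$-cohomology of $A[[\epsilon]]$. Let $\varpi\colon A[[\epsilon]]\to A$, $\sum\epsilon^n a_n\mapsto a_0$, a chain map $(A[[\epsilon]],\delta)\to(A,\mathrm{d})$, and $[\varpi]^i\colon\mathsf{B}^i\to\mathsf{A}^i$ the induced map in degree $i$. *)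

From HB Require Import structures.
From mathcomp Require Import all_boot all_order all_algebra.
Set Implicit Arguments. Unset Strict Implicit. Unset Printing Implicit Defensive.
Import GRing.Theory.
Local Open Scope ring_scope.

(* A : the graded K-module underlying the algebra of functions, A i = A^i.
   The sequence d n : A^i -> A^(i+1) (n : nat) are the coefficients of
   delta = tau_1 = sum_n eps^n d_n, with d 0 = d. *)

Definition Grade (K : fieldType) := int -> lmodType K.

Definition Coeffs (K : fieldType) (A : Grade K) :=
  nat -> forall i : int, {linear A i -> A (i + 1)}.

(* degree-i part of A[[eps]] : formal power series sum_n eps^n a_n, a_n in A^i *)
Definition series (K : fieldType) (A : Grade K) (i : int) := nat -> A i.

Definition delta (K : fieldType) (A : Grade K) (dd : Coeffs A) (i : int)
  (a : series A i) : series A (i + 1) :=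
  fun n => \sum_(k < n.+1) dd k i (a (n - k)%N).

Definition delta_sq_zero (K : fieldType) (A : Grade K) (dd : Coeffs A) :=
  forall (i : int) (a : series A i), delta dd (delta dd a) = (fun _ => 0).

Definition varpi (K : fieldType) (A : Grade K) (i : int) (a : series A i) : A i :=
  a 0%N.

Definition d_exact (K : fieldType) (A : Grade K) (dd : Coeffs A) (i : int)
  (x : A i) : Prop :=
  exists (j : int) (c : A j) (e : j + 1 = i), x = ecast k (A k) e (dd 0%N j c).

Definition cohom_A_vanishes_succ (K : fieldType) (A : Grade K) (dd : Coeffs A)
  (i : int) : Prop :=
  forall x : A (i + 1), dd 0%N (i + 1) x = 0 -> exists y : A i, dd 0%N i y = x.

(* [varpi]^i : B^i -> A^i is surjective: every class [a] in H^i_d(A)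
   is [varpi b] for some delta-cocycle b of degree i *)
Definition varpi_cohom_surjective (K : fieldType) (A : Grade K) (dd : Coeffs A)
  (i : int) : Prop :=
  forall a : A i, dd 0%N i a = 0 ->
    exists b : series A i,
      delta dd b = (fun _ => 0) /\ d_exact dd (varpi b - a).

From mathcomp Require Import all_boot all_order all_algebra.
From Stdlib Require Import ClassicalEpsilon FunctionalExtensionality.
Set Implicit Arguments. Unset Strict Implicit. Unset Printing Implicit Defensive.
Import GRing.Theory.
Local Open Scope ring_scope.

(* Starting from a d-cocycle a, build a delta-cocycle a + eps b_1 + eps^2 b_2 + ...
   order by order.  If the truncation up to eps^n is a delta-cocycle modulo
   eps^(n+1), then delta^2 = 0 makes its eps^(n+1)-coefficient d-closed in degree
   i+1; as H^(i+1) vanishes it is d-exact, and subtracting a d-primitive as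
   b_(n+1) kills it.  The limit series has leading term a. *)

Section Delta.
Variables (K : fieldType) (A : Grade K) (dd : Coeffs A).

Lemma delta_recl (i : int) (f : series A i) n :
  delta dd f n = dd 0%N i (f n) + \sum_(k < n) dd k.+1 i (f (n - k.+1)%N).
Proof. by rewrite /delta big_ord_recl subn0. Qed.

Lemma eq_delta_upto (i : int) (f g : series A i) n :
  (forall m, (m <= n)%N -> f m = g m) -> delta dd f n = delta dd g n.
Proof. by move=> eq_fg; apply: eq_bigr => k _; rewrite eq_fg ?leq_subr. Qed.

Definition set_coef (i : int) (f : series A i) n (y : A i) : series A i :=
  fun m => if m == n then y else f m.

Lemma delta_set_coef (i : int) (f : series A i) n y : f n = 0 ->
  delta dd (set_coef f n y) n = dd 0%N i y + delta dd f n.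
Proof.
move=> fn0; rewrite !delta_recl fn0 linear0 add0r /set_coef eqxx.
congr (_ + _); apply: eq_bigr => k _.
by rewrite ltn_eqF ?rev_ord_proof.
Qed.

Lemma delta_closed_next (i : int) (f : series A i) n :
  delta_sq_zero dd -> (forall m, (m <= n)%N -> delta dd f m = 0) ->
  dd 0%N (i + 1) (delta dd f n.+1) = 0.
Proof.
move=> dsq0 f_cocycle; have := congr1 (fun h => h n.+1) (dsq0 _ f).
rewrite /= delta_recl big1 ?addr0 // => k _.
by rewrite subSS f_cocycle ?linear0 ?leq_subr.
Qed.

Lemma d_exact0 (i : int) : d_exact dd (0 : A i).
Proof.
exists (i - 1), 0, (subrK 1 i); rewrite linear0.
by move: (subrK 1 i); move: (i - 1 + 1) => j eq_ji; subst.
Qed.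

End Delta.

Section Approximation.
Variables (K : fieldType) (A : Grade K) (dd : Coeffs A) (i : int) (a : A i).

Definition primitive (x : A (i + 1)) : A i :=
  epsilon (inhabits 0) (fun y => dd 0%N i y = x).

Fixpoint approx n : series A i :=
  if n is n'.+1 then
    set_coef (approx n') n (- primitive (delta dd (approx n') n))
  else set_coef (fun _ => 0) 0 a.

Lemma approxSE n :
  approx n.+1 = set_coef (approx n) n.+1 (- primitive (delta dd (approx n) n.+1)).
Proof. by []. Qed.

Definition approx_limit : series A i := fun m => approx m m.

Lemma approx_high n m : (n < m)%N -> approx n m = 0.
Proof.
elim: n => [|n IHn] lt_nm /=; rewrite /set_coef gtn_eqF //.
exact/IHn/ltnW.
Qed.

Lemma approxS n m : (m <= n)%N -> approx n.+1 m = approx n m.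
Proof. by move=> le_mn; rewrite /= /set_coef ltn_eqF. Qed.

Lemma approx_stable n n' m : (m <= n)%N -> (n <= n')%N ->
  approx n' m = approx n m.
Proof.
move=> le_mn; elim: n' => [|n' IHn']; first by rewrite leqn0 => /eqP ->.
rewrite leq_eqVlt => /orP[/eqP -> // | lt_nn'].
by rewrite approxS ?IHn' // (leq_trans le_mn).
Qed.

Hypotheses (dsq0 : delta_sq_zero dd) (Hvanish : cohom_A_vanishes_succ dd i).
Hypothesis a_closed : dd 0%N i a = 0.

Lemma primitiveP x : dd 0%N (i + 1) x = 0 -> dd 0%N i (primitive x) = x.
Proof. by move=> /Hvanish; apply: (epsilon_spec (inhabits 0) (fun y => dd 0%N i y = x)). Qed.

Lemma delta_approx n m : (m <= n)%N -> delta dd (approx n) m = 0.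
Proof.
elim: n m => [|n IHn] m.
  by rewrite leqn0 => /eqP ->; rewrite delta_recl big_ord0 addr0 /= a_closed.
rewrite leq_eqVlt => /orP[/eqP -> | le_mn].
  rewrite approxSE delta_set_coef ?approx_high // linearN /= primitiveP ?addNr //.
  exact: delta_closed_next.
rewrite (@eq_delta_upto _ _ _ _ _ (approx n)) ?IHn // => j le_jm.
by rewrite approxS // (leq_trans le_jm).
Qed.

Lemma delta_approx_limit n : delta dd approx_limit n = 0.
Proof.
rewrite (@eq_delta_upto _ _ _ _ _ (approx n)) ?delta_approx // => m le_mn.
by rewrite (approx_stable (leqnn m) le_mn).
Qed.

End Approximation.

Theorem lemma7p14 (K : fieldType) (A : Grade K) (dd : Coeffs A) (i : int) :
  delta_sq_zero dd ->
  cohom_A_vanishes_succ dd i ->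
  varpi_cohom_surjective dd i.
Proof.
move=> dsq0 Hvanish a a_closed; exists (approx_limit dd a); split.
  by apply: functional_extensionality => n; apply: delta_approx_limit.
by rewrite /varpi /= /set_coef /= subrr; apply: d_exact0.
Qed.
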